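(* Comprehension $\sqsubseteq$ is a preorder (reflexive and transitive relation) on the set of splitting maps on a finite-dimensional Hilbert space $\mathcal H$.
   Context: A splitting map on $\mathcal H$ is an isometry $\chi:\mathcal H\to\mathcal H_L^\chi\otimes\mathcal H_R^\chi$ for some finite-dimensional Hilbert spaces $\mathcal H_L^\chi,\mathcal H_R^\chi$. For splitting maps $\zeta,\chi$ on $\mathcal H$, $\zeta\sqsubseteq\chi$ ($\zeta$ is comprehended in $\chi$) if there exist a Hilbert space $\mathcal H_M$ and isometries $\bullet:\mathcal H_R^\zeta\to\mathcal H_M\otimes\mathcal H_R^\chi$ and $\circ:\mathcal H_L^\chi\to\mathcal H_L^\zeta\otimes\mathcal H_M$ such that $(\mathbb 1_{\mathcal H_L^\zeta}\otimes\bullet)\zeta=(\circ\otimes\mathbb 1_{\mathcal H_R^\chi})\chi$ as maps $\mathcal H\to\mathcal H_L^\zeta\otimes\mathcal H_M\otimes\mathcal H_R^\chi$. *)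

From HB Require Import structures.
From mathcomp Require Import all_boot all_order all_algebra.
From mathcomp Require Export mxtens.
Set Implicit Arguments. Unset Strict Implicit. Unset Printing Implicit Defensive.
Import GRing.Theory Num.Theory.
Local Open Scope ring_scope.

(* Finite-dimensional Hilbert spaces over a numeric closed field C (e.g. the
   complex numbers complex R), modelled as C^d with the standard inner
   product; linear maps C^n -> C^m are matrices 'M[C]_(m, n) acting on column
   vectors.  The tensor product C^a (x) C^b = C^(a*b) is the Kronecker product
   [tensmx] (from mathcomp real_closed/mxtens). *)

Definition adjmx (C : numClosedFieldType) m n (A : 'M[C]_(m, n)) : 'M[C]_(n, m) :=
  (map_mx Num.conj A)^T.

Definition isometry_mx (C : numClosedFieldType) m n (A : 'M[C]_(m, n)) : Prop :=
  adjmx A *m A = 1%:M.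

Record splitting_map (C : numClosedFieldType) (n : nat) := SplittingMap {
  dimL : nat;
  dimR : nat;
  smap : 'M[C]_(dimL * dimR, n);
  smap_isometry : isometry_mx smap
}.

(* zeta ⊑ chi : there exist H_M = C^k and isometries
   bullet : H_R^zeta -> H_M (x) H_R^chi,  circ : H_L^chi -> H_L^zeta (x) H_M
   with (1 (x) bullet) zeta = (circ (x) 1) chi as maps
   H -> H_L^zeta (x) H_M (x) H_R^chi  (the cast is the canonical
   associativity identification of C^(a*(k*b)) with C^((a*k)*b)). *)
Definition comprehended (C : numClosedFieldType) (n : nat)
  (zeta chi : splitting_map C n) : Prop :=
  exists (k : nat)
         (bullet : 'M[C]_(k * dimR chi, dimR zeta))
         (circ : 'M[C]_(dimL zeta * k, dimL chi)),
    [/\ isometry_mx bullet, isometry_mx circ &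
        castmx (mulnA (dimL zeta) k (dimR chi), erefl n)
          ((1%:M : 'M[C]_(dimL zeta)) *t bullet *m smap zeta)
        = (circ *t (1%:M : 'M[C]_(dimR chi))) *m smap chi].

From HB Require Import structures.
From mathcomp Require Import all_boot all_order all_algebra.
Set Implicit Arguments. Unset Strict Implicit. Unset Printing Implicit Defensive.
Import GRing.Theory Num.Theory.
Local Open Scope ring_scope.

(* Reflexivity is witnessed by the trivial middle space C^1, both isometries
   being the canonical identifications C^b = C^(1*b) and C^a = C^(a*1).
   For transitivity, if (H_M, bullet1, circ1) witnesses zeta ⊑ chi and
   (H_M', bullet2, circ2) witnesses chi ⊑ xi, then H_M ⊗ H_M' with
   bullet = (1 ⊗ bullet2) bullet1 and circ = (circ1 ⊗ 1) circ2 witnesses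
   zeta ⊑ xi: by the two hypotheses and the interchange law of ⊗, both
   (1 ⊗ bullet) zeta and (circ ⊗ 1) xi equal (circ1 ⊗ bullet2) chi.
   The Kronecker product is associative only up to casts of dimensions; since
   equality proofs on nat are irrelevant, any two casts of a matrix to the same
   dimensions coincide ([eq_castmx]), which is how these casts are discharged. *)

Section CastTensor.
Variable R : comPzRingType.

Lemma mulmx_castmx m m' n n' p p' (e1 : m = m') (e2 e2' : n = n') (e3 : p = p')
    (A : 'M[R]_(m, n)) (B : 'M[R]_(n, p)) :
  castmx (e1, e2) A *m castmx (e2', e3) B = castmx (e1, e3) (A *m B).
Proof.
rewrite (eq_irrelevance e2' e2); clear e2'.
by case: m' / e1; case: n' / e2; case: p' / e3; rewrite !castmx_id.
Qed.

Lemma castmx_rows_mulmx m m' n p (e : m = m') (A : 'M[R]_(m, n)) (B : 'M[R]_(n, p)) :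
  castmx (e, erefl) A *m B = castmx (e, erefl) (A *m B).
Proof. by case: m' / e; rewrite !castmx_id. Qed.

Lemma castmx1 m m' (e e' : m = m') : castmx (e, e') (1%:M : 'M[R]_m) = 1%:M.
Proof. by rewrite (eq_irrelevance e' e); case: m' / e e'; rewrite castmx_id. Qed.

Lemma tensmx_castl m m' n n' p q (e1 : m = m') (e2 : n = n')
    (A : 'M[R]_(m, n)) (B : 'M[R]_(p, q)) :
  castmx (e1, e2) A *t B =
  castmx (congr1 (muln^~ p) e1, congr1 (muln^~ q) e2) (A *t B).
Proof. by case: m' / e1; case: n' / e2; rewrite !castmx_id. Qed.

Lemma tensmx_castr m n p p' q q' (e1 : p = p') (e2 : q = q')
    (A : 'M[R]_(m, n)) (B : 'M[R]_(p, q)) :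
  A *t castmx (e1, e2) B =
  castmx (congr1 (muln m) e1, congr1 (muln n) e2) (A *t B).
Proof. by case: p' / e1; case: q' / e2; rewrite !castmx_id. Qed.

Lemma tensmxA m n p q r s (A : 'M[R]_(m, n)) (B : 'M[R]_(p, q)) (D : 'M[R]_(r, s)) :
  A *t B *t D = castmx (mulnA m p r, mulnA n q s) (A *t (B *t D)).
Proof.
have assoc_index k l u (i : 'I_k) (j : 'I_l) (h : 'I_u) :
    cast_ord (esym (mulnA k l u)) (mxtens_index (mxtens_index (i, j), h))
    = mxtens_index (i, mxtens_index (j, h)).
  by apply: val_inj; rewrite /= mulnDl -mulnA addnA.
apply/matrixP => i j.
case: (mxtens_indexP i) => i' i3; case: (mxtens_indexP i') => i1 i2.
case: (mxtens_indexP j) => j' j3; case: (mxtens_indexP j') => j1 j2.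
by rewrite castmxE !assoc_index !tensmxE mulrA.
Qed.

Lemma tensmx11 m p : (1%:M : 'M[R]_m) *t (1%:M : 'M[R]_p) = 1%:M.
Proof.
apply/matrixP => i j.
case: (mxtens_indexP i) => i1 i2; case: (mxtens_indexP j) => j1 j2.
rewrite tensmxE !mxE (inj_eq (can_inj (@mxtens_indexK _ _))) xpair_eqE.
by case: (i1 == j1); case: (i2 == j2); rewrite ?mulr1 ?mulr0 ?mul0r.
Qed.

Lemma tens1mxM m n p q (A : 'M[R]_(m, n)) (B : 'M[R]_(n, p)) :
  (1%:M : 'M[R]_q) *t (A *m B) = (1%:M *t A) *m (1%:M *t B).
Proof. by rewrite tensmx_mul mulmx1. Qed.

Lemma tensmx1M m n p q (A : 'M[R]_(m, n)) (B : 'M[R]_(n, p)) :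
  (A *m B) *t (1%:M : 'M[R]_q) = (A *t 1%:M) *m (B *t 1%:M).
Proof. by rewrite tensmx_mul mulmx1. Qed.

End CastTensor.

Section Isometries.
Variable C : numClosedFieldType.

Lemma adjmxM m n p (A : 'M[C]_(m, n)) (B : 'M[C]_(n, p)) :
  adjmx (A *m B) = adjmx B *m adjmx A.
Proof. by rewrite /adjmx map_mxM trmx_mul. Qed.

Lemma adjmx_tens m n p q (A : 'M[C]_(m, n)) (B : 'M[C]_(p, q)) :
  adjmx (A *t B) = adjmx A *t adjmx B.
Proof. by rewrite /adjmx map_mxT trmx_tens. Qed.

Lemma adjmx1 m : adjmx (1%:M : 'M[C]_m) = 1%:M.
Proof. by rewrite /adjmx map_mx1 trmx1. Qed.

Lemma adjmx_cast m n m' n' (e1 : m = m') (e2 : n = n') (A : 'M[C]_(m, n)) :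
  adjmx (castmx (e1, e2) A) = castmx (e2, e1) (adjmx A).
Proof. by rewrite /adjmx map_castmx trmx_cast. Qed.

Lemma isometry_mx1 m : isometry_mx (1%:M : 'M[C]_m).
Proof. by rewrite /isometry_mx adjmx1 mulmx1. Qed.

Lemma isometry_mxM m n p (A : 'M[C]_(m, n)) (B : 'M[C]_(n, p)) :
  isometry_mx A -> isometry_mx B -> isometry_mx (A *m B).
Proof.
rewrite /isometry_mx adjmxM => isoA isoB.
by rewrite mulmxA -(mulmxA (adjmx B)) isoA mulmx1.
Qed.

Lemma isometry_mx_tens m n p q (A : 'M[C]_(m, n)) (B : 'M[C]_(p, q)) :
  isometry_mx A -> isometry_mx B -> isometry_mx (A *t B).
Proof. by rewrite /isometry_mx adjmx_tens tensmx_mul => -> ->; rewrite tensmx11. Qed.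

Lemma isometry_castmx m n m' n' (e1 : m = m') (e2 : n = n') (A : 'M[C]_(m, n)) :
  isometry_mx A -> isometry_mx (castmx (e1, e2) A).
Proof. by rewrite /isometry_mx adjmx_cast mulmx_castmx => ->; rewrite castmx1. Qed.

End Isometries.

Section Comprehension.
Variable R : comPzRingType.

Definition comprehended_by n a r l b k (zeta : 'M[R]_(a * r, n))
    (chi : 'M[R]_(l * b, n)) (bullet : 'M[R]_(k * b, r)) (circ : 'M[R]_(a * k, l)) :=
  castmx (mulnA a k b, erefl n) ((1%:M : 'M[R]_a) *t bullet *m zeta)
  = (circ *t (1%:M : 'M[R]_b)) *m chi.

Lemma comprehended_by_refl n a b (chi : 'M[R]_(a * b, n)) :
  comprehended_by chi chi (castmx (esym (mul1n b), erefl) 1%:M)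
                          (castmx (esym (muln1 a), erefl) 1%:M).
Proof.
rewrite /comprehended_by tensmx_castr tensmx_castl !tensmx11.
by rewrite !castmx_rows_mulmx !mul1mx castmx_comp; apply: eq_castmx.
Qed.

Definition compose_bullet k1 k2 r r' r'' (b1 : 'M[R]_(k1 * r', r))
    (b2 : 'M[R]_(k2 * r'', r')) : 'M[R]_(k1 * k2 * r'', r) :=
  castmx (mulnA k1 k2 r'', erefl r) ((1%:M : 'M[R]_k1) *t b2 *m b1).

Definition compose_circ l l' l'' k1 k2 (c1 : 'M[R]_(l * k1, l'))
    (c2 : 'M[R]_(l' * k2, l'')) : 'M[R]_(l * (k1 * k2), l'') :=
  castmx (esym (mulnA l k1 k2), erefl l'') ((c1 *t (1%:M : 'M[R]_k2)) *m c2).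

Section Transitivity.
Variables (n Lz Rz Lc Rc Lx Rx k1 k2 : nat).
Variables (zeta : 'M[R]_(Lz * Rz, n)) (chi : 'M[R]_(Lc * Rc, n)) (xi : 'M[R]_(Lx * Rx, n)).
Variables (b1 : 'M[R]_(k1 * Rc, Rz)) (c1 : 'M[R]_(Lz * k1, Lc)).
Variables (b2 : 'M[R]_(k2 * Rx, Rc)) (c2 : 'M[R]_(Lc * k2, Lx)).
Hypothesis zeta_chi : comprehended_by zeta chi b1 c1.
Hypothesis chi_xi : comprehended_by chi xi b2 c2.

Lemma compose_bullet_zeta (e : (Lz * k1 * (k2 * Rx) = Lz * (k1 * k2 * Rx))%N) :
  (1%:M : 'M[R]_Lz) *t compose_bullet b1 b2 *m zeta
  = castmx (e, erefl n) ((c1 *t b2) *m chi).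
Proof.
have zeta_b1 := castmx_sym (esym zeta_chi).
rewrite /compose_bullet tensmx_castr castmx_rows_mulmx tens1mxM -mulmxA zeta_b1.
rewrite (castmx_sym (tensmxA 1%:M 1%:M b2)) tensmx11 mulmx_castmx castmx_comp.
by rewrite mulmxA tensmx_mul mulmx1 mul1mx; apply: eq_castmx.
Qed.

Lemma compose_circ_xi (e : (Lz * k1 * (k2 * Rx) = Lz * (k1 * k2) * Rx)%N) :
  (compose_circ c1 c2 *t (1%:M : 'M[R]_Rx)) *m xi
  = castmx (e, erefl n) ((c1 *t b2) *m chi).
Proof.
rewrite /compose_circ tensmx_castl castmx_rows_mulmx tensmx1M -mulmxA -chi_xi.
rewrite tensmxA tensmx11 mulmx_castmx castmx_comp.
by rewrite mulmxA tensmx_mul mulmx1 mul1mx; apply: eq_castmx.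
Qed.

Lemma comprehended_by_trans :
  comprehended_by zeta xi (compose_bullet b1 b2) (compose_circ c1 c2).
Proof.
have eL : (Lz * k1 * (k2 * Rx) = Lz * (k1 * k2 * Rx))%N by rewrite !mulnA.
have eR : (Lz * k1 * (k2 * Rx) = Lz * (k1 * k2) * Rx)%N by rewrite !mulnA.
rewrite /comprehended_by (compose_bullet_zeta eL) (compose_circ_xi eR) castmx_comp.
exact: eq_castmx.
Qed.
End Transitivity.
End Comprehension.

Section ComposeIsometry.
Variable C : numClosedFieldType.

Lemma isometry_compose_bullet k1 k2 r r' r'' (b1 : 'M[C]_(k1 * r', r))
    (b2 : 'M[C]_(k2 * r'', r')) :
  isometry_mx b1 -> isometry_mx b2 -> isometry_mx (compose_bullet b1 b2).
Proof.
move=> iso_b1 iso_b2; apply/isometry_castmx/isometry_mxM => //.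
by apply: isometry_mx_tens => //; exact: isometry_mx1.
Qed.

Lemma isometry_compose_circ l l' l'' k1 k2 (c1 : 'M[C]_(l * k1, l'))
    (c2 : 'M[C]_(l' * k2, l'')) :
  isometry_mx c1 -> isometry_mx c2 -> isometry_mx (compose_circ c1 c2).
Proof.
move=> iso_c1 iso_c2; apply/isometry_castmx/isometry_mxM => //.
by apply: isometry_mx_tens => //; exact: isometry_mx1.
Qed.

End ComposeIsometry.

Theorem mainTheorem6 (C : numClosedFieldType) (n : nat) :
  (forall chi : splitting_map C n, comprehended chi chi) /\
  (forall zeta chi xi : splitting_map C n,
      comprehended zeta chi -> comprehended chi xi -> comprehended zeta xi).
Proof.
split.
  move=> chi; exists 1%N, (castmx (esym (mul1n (dimR chi)), erefl) 1%:M),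
    (castmx (esym (muln1 (dimL chi)), erefl) 1%:M).
  by split; [exact/isometry_castmx/isometry_mx1.. | exact: comprehended_by_refl].
move=> zeta chi xi [k1 [b1 [c1 [iso_b1 iso_c1 zeta_chi]]]].
move=> [k2 [b2 [c2 [iso_b2 iso_c2 chi_xi]]]].
exists (k1 * k2)%N, (compose_bullet b1 b2), (compose_circ c1 c2); split.
- exact: isometry_compose_bullet.
- exact: isometry_compose_circ.
- exact: comprehended_by_trans zeta_chi chi_xi.
Qed.
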